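(* For every set $\Gamma$ of triples about atomic actions, every test $b$, program $C$ and $P\subseteq\Sigma$: if $\Gamma\vdash\{\mathbf 1(P\wedge b)\}\ C\ \{\Box P\}$, then $\Gamma\vdash\{\mathbf 1P\}\ \mathsf{while}\ b\ \mathsf{do}\ C\ \{\Box(P\wedge\neg b)\}$.
   Context: Partial semiring $\mathcal A=\langle U,+,\cdot,\mathbf 0,\mathbf 1\rangle$ ($+$ commutative, associative, possibly partial, unit $\mathbf 0$; $\cdot$ total, associative, unit $\mathbf 1$; two-sided distributivity; $\mathbf 0$ annihilates), naturally ordered, Scott continuous, with a top element; infinite sums are suprema of finite partial sums. $\mathcal W(\Sigma)$: maps $m:\Sigma\to U$ with countable support $\mathrm{supp}(m)=\{\sigma:m(\sigma)\ne\mathbf 0\}$ and defined mass $|m|=\sum_{\sigma\in\mathrm{supp}(m)}m(\sigma)$; operations pointwise. $\eta(\sigma)$ is $\mathbf 1$ at $\sigma$ and $\mathbf 0$ elsewhere; $f^\dagger(m)(\tau)=\sum_{\sigma\in\mathrm{supp}(m)}m(\sigma)\cdot f(\sigma)(\tau)$. Programs over states $\Sigma$: $C::=\mathsf{skip}\mid C_1;C_2\mid C_1+C_2\mid\mathsf{assume}\ e\mid C^{\langle e,e'\rangle}\mid a$ with atomic actions $a$, $e$ a test $b$ (Boolean combination of $\mathsf{true},\mathsf{false}$ and primitive tests $t\subseteq\Sigma$, $[\![b]\!](\sigma)=\mathbf 1$ iff true, else $\mathbf 0$) or a weight $u\in U$; semantics $[\![\mathsf{skip}]\!](\sigma)=\eta(\sigma)$,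 $[\![C_1;C_2]\!](\sigma)=[\![C_2]\!]^\dagger([\![C_1]\!](\sigma))$, $[\![C_1+C_2]\!](\sigma)=[\![C_1]\!](\sigma)+[\![C_2]\!](\sigma)$, $[\![\mathsf{assume}\ e]\!](\sigma)=[\![e]\!](\sigma)\cdot\eta(\sigma)$, $[\![C^{\langle e,e'\rangle}]\!]$ the least fixed point of $\Phi(f)(\sigma)=[\![e]\!](\sigma)\cdot f^\dagger([\![C]\!](\sigma))+[\![e']\!](\sigma)\cdot\eta(\sigma)$. $\mathsf{while}\ b\ \mathsf{do}\ C$ abbreviates $C^{\langle b,\neg b\rangle}$. For $P\subseteq\Sigma$ and a test $b$, $P\wedge b=\{\sigma\in P:[\![b]\!](\sigma)=\mathbf 1\}$ and $P\wedge\neg b=\{\sigma\in P:[\![b]\!](\sigma)=\mathbf 0\}$. Assertions are subsets of $\mathcal W(\Sigma)$; $\bigoplus_{x\in T}\phi(x)=\{\sum_{t\in T}m_t:m_t\in\phi(t)\ \forall t\}$, $\varphi\oplus\psi$ the binary case, $u\odot\varphi=\{u\cdot m:m\in\varphi\}$, $\varphi\odot u=\{m\cdot u:m\in\varphi\}$; $\mathbf 1P=\{m:|m|=\mathbf 1,\mathrm{supp}(m)\subseteq P\}$; $\Box P=\{m:\mathrm{supp}(m)\subseteq P\}$. $\Gamma\vdash\{\varphi\}C\{\psi\}$ means derivable from axioms in $\Gamma$ using: (Skip) $\{\varphi\}\mathsf{skip}\{\varphi\}$; (Seq) $\{\varphi\}C_1\{\vartheta\},\{\vartheta\}C_2\{\psi\}\Rightarrow\{\varphi\}C_1;C_2\{\psi\}$;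 (Plus) $\{\varphi\}C_1\{\psi_1\},\{\varphi\}C_2\{\psi_2\}\Rightarrow\{\varphi\}C_1+C_2\{\psi_1\oplus\psi_2\}$; (Assume) if $[\![e]\!](\sigma)=u$ for all $m\in\varphi,\sigma\in\mathrm{supp}(m)$ then $\{\varphi\}\mathsf{assume}\ e\{\varphi\odot u\}$; (Iter) if $(\psi_n)$ converges to $\psi_\infty$ (whenever $m_n\in\psi_n$ for all $n$, $\sum_n m_n\in\psi_\infty$) and for all $n$, $\{\varphi_n\}\mathsf{assume}\ e;C\{\varphi_{n+1}\}$ and $\{\varphi_n\}\mathsf{assume}\ e'\{\psi_n\}$, then $\{\varphi_0\}C^{\langle e,e'\rangle}\{\psi_\infty\}$; (False) $\{\emptyset\}C\{\varphi\}$; (True) $\{\varphi\}C\{\mathcal W(\Sigma)\}$; (Scale) $\{\varphi\}C\{\psi\}\Rightarrow\{u\odot\varphi\}C\{u\odot\psi\}$; (Disj), (Conj): from two triples infer the triple with $\cup$, resp. $\cap$, of pre- and postconditions; (Choice) $\forall t\in T.\{\phi(t)\}C\{\phi'(t)\}\Rightarrow\{\bigoplus_{x\in T}\phi(x)\}C\{\bigoplus_{x\in T}\phi'(x)\}$; (Exists) same premises $\Rightarrow\{\bigcup_t\phi(t)\}C\{\bigcup_t\phi'(t)\}$; (Consequence) $\varphi'\subseteq\varphi$, $\{\varphi\}C\{\psi\}$, $\psi\subseteq\psi'\Rightarrow\{\varphi'\}C\{\psi'\}$. *)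

From Stdlib Require Import List ClassicalEpsilon.
Import ListNotations.

Set Implicit Arguments.

Record psr_ops := {
  car   : Type;
  padd  : car -> car -> option car;
  pmul  : car -> car -> car;
  pzero : car;
  pone  : car }.

Definition obind {X Y : Type} (o : option X) (f : X -> option Y) : option Y :=
  match o with Some x => f x | None => None end.

Section Order.
Variable S : psr_ops.

Definition ple (a b : car S) : Prop := exists c, padd S a c = Some b.

Definition is_lub (D : car S -> Prop) (s : car S) : Prop :=
  (forall d, D d -> ple d s) /\ (forall u, (forall d, D d -> ple d u) -> ple s u).

Definition directed (D : car S -> Prop) : Prop :=
  (exists d, D d) /\
  (forall x y, D x -> D y -> exists z, D z /\ ple x z /\ ple y z).
End Order.

Record psr_axioms (S : psr_ops) : Prop := {
  padd_comm  : forall a b, padd S a b = padd S b a;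
  padd_assoc : forall a b c,
      obind (padd S a b) (fun x => padd S x c) =
      obind (padd S b c) (fun y => padd S a y);
  padd_0l    : forall a, padd S (pzero S) a = Some a;
  pmul_assoc : forall a b c, pmul S a (pmul S b c) = pmul S (pmul S a b) c;
  pmul_1l    : forall a, pmul S (pone S) a = a;
  pmul_1r    : forall a, pmul S a (pone S) = a;
  pdistr_l   : forall a b c d, padd S b c = Some d ->
      padd S (pmul S a b) (pmul S a c) = Some (pmul S a d);
  pdistr_r   : forall a b c d, padd S b c = Some d ->
      padd S (pmul S b a) (pmul S c a) = Some (pmul S d a);
  pmul_0l    : forall a, pmul S (pzero S) a = pzero S;
  pmul_0r    : forall a, pmul S a (pzero S) = pzero S;
  ple_antisym : forall a b, ple S a b -> ple S b a -> a = b;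
  dir_sup    : forall D, directed S D -> exists s, is_lub S D s;
  mul_cont_l : forall D s a, directed S D -> is_lub S D s ->
      is_lub S (fun x => exists d, D d /\ x = pmul S a d) (pmul S a s);
  mul_cont_r : forall D s a, directed S D -> is_lub S D s ->
      is_lub S (fun x => exists d, D d /\ x = pmul S d a) (pmul S s a);
  add_cont   : forall D s a, directed S D -> is_lub S D s ->
      (forall d, D d -> exists x, padd S a d = Some x) ->
      exists t, padd S a s = Some t /\
        is_lub S (fun x => exists d, D d /\ padd S a d = Some x) t;
  has_top    : exists t, forall a, ple S a t }.

Section Sums.
Variable S : psr_ops.

Fixpoint fsum {I : Type} (f : I -> car S) (l : list I) : option (car S) :=
  match l with
  | [] => Some (pzero S)
  | i :: l' => obind (fsum f l') (fun v => padd S (f i) v)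
  end.

Definition is_sum {I : Type} (f : I -> car S) (s : car S) : Prop :=
  (forall l, NoDup l -> fsum f l <> None) /\
  is_lub S (fun v => exists l, NoDup l /\ fsum f l = Some v) s.
End Sums.

Section Weights.
Variable S : psr_ops.
Variable Sigma : Type.

Definition supp_t (m : Sigma -> car S) := { s : Sigma | m s <> pzero S }.

Definition countable_supp (m : Sigma -> car S) : Prop :=
  exists g : supp_t m -> nat, forall x y, g x = g y -> x = y.

Definition mass_is (m : Sigma -> car S) (u : car S) : Prop :=
  is_sum S (fun x : supp_t m => m (proj1_sig x)) u.

Definition isW (m : Sigma -> car S) : Prop :=
  countable_supp m /\ exists u, mass_is m u.

Definition W := { m : Sigma -> car S | isW m }.

Definition wf (m : W) : Sigma -> car S := proj1_sig m.

Definition assertion := W -> Prop.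

Definition wsum {T : Type} (f : T -> W) (s : W) : Prop :=
  forall sg, is_sum S (fun t => wf (f t) sg) (wf s sg).

Definition bigoplus {T : Type} (phi : T -> assertion) : assertion :=
  fun s => exists f : T -> W, (forall t, phi t (f t)) /\ wsum f s.

Definition oplus (phi psi : assertion) : assertion :=
  fun s => exists m1 m2, phi m1 /\ psi m2 /\
    forall sg, padd S (wf m1 sg) (wf m2 sg) = Some (wf s sg).

Definition smul_l (u : car S) (phi : assertion) : assertion :=
  fun s => exists m, phi m /\ forall sg, wf s sg = pmul S u (wf m sg).
Definition smul_r (phi : assertion) (u : car S) : assertion :=
  fun s => exists m, phi m /\ forall sg, wf s sg = pmul S (wf m sg) u.

Definition OneA (P : Sigma -> Prop) : assertion :=
  fun m => mass_is (wf m) (pone S) /\ forall sg, wf m sg <> pzero S -> P sg.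
Definition BoxA (P : Sigma -> Prop) : assertion :=
  fun m => forall sg, wf m sg <> pzero S -> P sg.

Definition WAll : assertion := fun _ => True.
Definition AFalse : assertion := fun _ => False.
Definition subA (phi psi : assertion) : Prop := forall m, phi m -> psi m.
Definition unionA (phi psi : assertion) : assertion := fun m => phi m \/ psi m.
Definition interA (phi psi : assertion) : assertion := fun m => phi m /\ psi m.
Definition bigunion {T : Type} (phi : T -> assertion) : assertion :=
  fun m => exists t, phi t m.

Definition converges (psi : nat -> assertion) (psiinf : assertion) : Prop :=
  forall (m : nat -> W) (s : W), (forall n, psi n (m n)) -> wsum m s -> psiinf s.
End Weights.

Inductive test (Sigma : Type) : Type :=
| TTrue | TFalse
| TPrim (t : Sigma -> Prop)
| TNot (b : test Sigma)
| TAnd (b1 b2 : test Sigma)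
| TOr  (b1 b2 : test Sigma).
Arguments TTrue {Sigma}. Arguments TFalse {Sigma}.

Fixpoint tholds {Sigma : Type} (b : test Sigma) (s : Sigma) : Prop :=
  match b with
  | TTrue => True
  | TFalse => False
  | TPrim t => t s
  | TNot b => ~ tholds b s
  | TAnd b1 b2 => tholds b1 s /\ tholds b2 s
  | TOr b1 b2 => tholds b1 s \/ tholds b2 s
  end.

Definition tsem (S : psr_ops) {Sigma : Type} (b : test Sigma) (s : Sigma) : car S :=
  if excluded_middle_informative (tholds b s) then pone S else pzero S.

Inductive expr (S : psr_ops) (Sigma : Type) : Type :=
| ETest (b : test Sigma)
| EWeight (u : car S).
Arguments ETest {S Sigma} b.
Arguments EWeight {S Sigma} u.

Definition esem {S : psr_ops} {Sigma : Type} (e : expr S Sigma) (s : Sigma) : car S :=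
  match e with
  | ETest b => tsem S b s
  | EWeight u => u
  end.

Inductive cmd (S : psr_ops) (Sigma A : Type) : Type :=
| Skip
| SeqC (C1 C2 : cmd S Sigma A)
| PlusC (C1 C2 : cmd S Sigma A)
| Assume (e : expr S Sigma)
| IterC (C : cmd S Sigma A) (e e' : expr S Sigma)
| Atom (a : A).
Arguments Skip {S Sigma A}. Arguments Atom {S Sigma A} a.
Arguments Assume {S Sigma A} e.

Definition While {S : psr_ops} {Sigma A : Type} (b : test Sigma) (C : cmd S Sigma A)
  : cmd S Sigma A :=
  IterC C (ETest b) (ETest (TNot b)).

Definition andT (S : psr_ops) {Sigma : Type} (P : Sigma -> Prop) (b : test Sigma)
  : Sigma -> Prop := fun s => P s /\ tsem S b s = pone S.
Definition andNotT (S : psr_ops) {Sigma : Type} (P : Sigma -> Prop) (b : test Sigma)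
  : Sigma -> Prop := fun s => P s /\ tsem S b s = pzero S.

Section Deriv.
Variables (S : psr_ops) (Sigma A : Type).
Notation As := (assertion S Sigma).
Notation Cm := (cmd S Sigma A).

Inductive derivable (Gamma : As -> A -> As -> Prop) : As -> Cm -> As -> Prop :=
| r_axiom : forall phi a psi, Gamma phi a psi -> derivable Gamma phi (Atom a) psi
| r_skip : forall phi, derivable Gamma phi Skip phi
| r_seq : forall phi th psi C1 C2,
    derivable Gamma phi C1 th -> derivable Gamma th C2 psi ->
    derivable Gamma phi (SeqC C1 C2) psi
| r_plus : forall phi psi1 psi2 C1 C2,
    derivable Gamma phi C1 psi1 -> derivable Gamma phi C2 psi2 ->
    derivable Gamma phi (PlusC C1 C2) (oplus psi1 psi2)
| r_assume : forall phi e u,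
    (forall m sg, phi m -> wf m sg <> pzero S -> esem e sg = u) ->
    derivable Gamma phi (Assume e) (smul_r phi u)
| r_iter : forall (phi psi : nat -> As) psiinf C e e',
    converges psi psiinf ->
    (forall n, derivable Gamma (phi n) (SeqC (Assume e) C) (phi (Datatypes.S n))) ->
    (forall n, derivable Gamma (phi n) (Assume e') (psi n)) ->
    derivable Gamma (phi 0) (IterC C e e') psiinf
| r_false : forall C phi, derivable Gamma (@AFalse S Sigma) C phi
| r_true : forall C phi, derivable Gamma phi C (@WAll S Sigma)
| r_scale : forall phi C psi u,
    derivable Gamma phi C psi -> derivable Gamma (smul_l u phi) C (smul_l u psi)
| r_disj : forall phi1 phi2 psi1 psi2 C,
    derivable Gamma phi1 C psi1 -> derivable Gamma phi2 C psi2 ->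
    derivable Gamma (unionA phi1 phi2) C (unionA psi1 psi2)
| r_conj : forall phi1 phi2 psi1 psi2 C,
    derivable Gamma phi1 C psi1 -> derivable Gamma phi2 C psi2 ->
    derivable Gamma (interA phi1 phi2) C (interA psi1 psi2)
| r_choice : forall (T : Type) (phi phi' : T -> As) C,
    (forall t, derivable Gamma (phi t) C (phi' t)) ->
    derivable Gamma (bigoplus phi) C (bigoplus phi')
| r_exists : forall (T : Type) (phi phi' : T -> As) C,
    (forall t, derivable Gamma (phi t) C (phi' t)) ->
    derivable Gamma (bigunion phi) C (bigunion phi')
| r_conseq : forall phi phi' psi psi' C,
    subA phi' phi -> derivable Gamma phi C psi -> subA psi psi' ->
    derivable Gamma phi' C psi'.
End Deriv.

(* The loop is handled by the Iter rule with the constant invariant [Box P] and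
   the constant exit assertion [Box (P /\ ~b)]; assertions of the form [Box Q]
   are closed under arbitrary sums, so convergence is immediate.  A weighting
   function supported in P is the sum over σ ∈ P of the scaled point masses
   m(σ) · η(σ), so by Exists, Choice and Scale it suffices to run one iteration
   from a single point 1{σ}.  There [assume b] either leaves the point mass
   unchanged (and the hypothesis on C applies) or annihilates it, and the zero
   weighting function is preserved by every program (Choice over the empty
   family). *)
From Stdlib Require Import List ClassicalEpsilon Classical ProofIrrelevance
  FunctionalExtensionality.
Import ListNotations.
Set Implicit Arguments.

Section PartialSemiring.
Variable S : psr_ops.
Hypothesis HS : psr_axioms S.

Lemma padd_0r a : padd S a (pzero S) = Some a.
Proof. rewrite (padd_comm HS). apply (padd_0l HS). Qed.

Lemma ple_refl a : ple S a a.
Proof. exists (pzero S). apply padd_0r. Qed.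

Lemma ple_0l a : ple S (pzero S) a.
Proof. exists a. apply (padd_0l HS). Qed.

Lemma is_lub_unique D s t : is_lub S D s -> is_lub S D t -> s = t.
Proof.
  intros [Hs_ub Hs_least] [Ht_ub Ht_least].
  apply (ple_antisym HS); [apply Hs_least | apply Ht_least]; assumption.
Qed.

Lemma is_lub_greatest (D : car S -> Prop) a :
  D a -> (forall d, D d -> ple S d a) -> is_lub S D a.
Proof. intros Da Hub. split; [exact Hub | intros u Hu; exact (Hu a Da)]. Qed.

Section Sums.
Variables (I : Type) (F : I -> car S).

Lemma fsum_zero : (forall i, F i = pzero S) -> forall l, fsum S F l = Some (pzero S).
Proof.
  intros HF l. induction l as [|i l IH]; [reflexivity|].
  simpl. rewrite IH, HF. apply (padd_0l HS).
Qed.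

Lemma is_sum_zero : (forall i, F i = pzero S) -> is_sum S F (pzero S).
Proof.
  intros HF. split.
  - intros l _. rewrite (fsum_zero HF). discriminate.
  - apply is_lub_greatest.
    + exists []. split; [constructor | reflexivity].
    + intros d [l [_ Hl]]. rewrite (fsum_zero HF) in Hl. injection Hl as <-. apply ple_refl.
Qed.

Lemma is_sum_zero_eq s : is_sum S F s -> (forall i, F i = pzero S) -> s = pzero S.
Proof. intros [_ Hlub] HF. exact (is_lub_unique Hlub (proj2 (is_sum_zero HF))). Qed.

Variable i0 : I.
Hypothesis F_single : forall i, i <> i0 -> F i = pzero S.

Lemma fsum_single l : NoDup l ->
  (In i0 l /\ fsum S F l = Some (F i0)) \/ (~ In i0 l /\ fsum S F l = Some (pzero S)).
Proof.
  induction l as [|i l IH]; intros Hnd; [right; split; [intros [] | reflexivity]|].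
  inversion Hnd as [|? ? Hi_l Hnd_l]; subst.
  destruct (classic (i = i0)) as [-> | Hne].
  - left. split; [left; reflexivity|].
    destruct (IH Hnd_l) as [[Hin _] | [_ E]]; [contradiction|].
    simpl. rewrite E. apply padd_0r.
  - simpl. rewrite (F_single Hne).
    destruct (IH Hnd_l) as [[Hin ->] | [Hnin ->]]; simpl; rewrite (padd_0l HS).
    + left. split; [right|]; auto.
    + right. split; [intros [|]; contradiction | reflexivity].
Qed.

Lemma is_sum_single : is_sum S F (F i0).
Proof.
  split.
  - intros l Hnd. destruct (fsum_single Hnd) as [[_ ->] | [_ ->]]; discriminate.
  - apply is_lub_greatest.
    + exists [i0]. split; [repeat constructor; intros [] | apply padd_0r].
    + intros d [l [Hnd Hl]].
      destruct (fsum_single Hnd) as [[_ E] | [_ E]]; rewrite E in Hl; injection Hl as <-.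
      * apply ple_refl.
      * apply ple_0l.
Qed.
End Sums.

Section Weights.
Variable Sigma : Type.

Definition dirac (u : car S) (sg : Sigma) : Sigma -> car S :=
  fun s => if excluded_middle_informative (s = sg) then u else pzero S.

Lemma dirac_at u sg : dirac u sg sg = u.
Proof. unfold dirac. destruct (excluded_middle_informative (sg = sg)); congruence. Qed.

Lemma dirac_off u sg s : s <> sg -> dirac u sg s = pzero S.
Proof. unfold dirac. destruct (excluded_middle_informative (s = sg)); congruence. Qed.

Lemma supp_dirac_eq u sg (x y : supp_t S (dirac u sg)) : x = y.
Proof.
  assert (Hat : forall z : supp_t S (dirac u sg), proj1_sig z = sg).
  { intros [z Hz]. apply NNPP. intros Hne. exact (Hz (dirac_off u Hne)). }
  apply eq_sig_hprop; [intros; apply proof_irrelevance|].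
  rewrite (Hat x), (Hat y). reflexivity.
Qed.

Lemma mass_dirac u sg : mass_is S (dirac u sg) u.
Proof.
  destruct (classic (u = pzero S)) as [-> | Hu].
  - apply is_sum_zero. intros [s Hs]. simpl.
    destruct (classic (s = sg)) as [-> | Hne]; [apply dirac_at | apply dirac_off, Hne].
  - assert (Hsg : dirac u sg sg <> pzero S) by now rewrite dirac_at.
    pose (x0 := exist (fun s => dirac u sg s <> pzero S) sg Hsg).
    rewrite <- (dirac_at u sg) at 2.
    apply is_sum_single with (i0 := x0). intros i Hi. contradiction (Hi (supp_dirac_eq i x0)).
Qed.

Lemma isW_dirac u sg : isW S (dirac u sg).
Proof.
  split; [|exists u; apply mass_dirac].
  exists (fun _ => 0). intros x y _. apply supp_dirac_eq.
Qed.

Definition diracW (u : car S) (sg : Sigma) : W S Sigma :=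
  exist _ (dirac u sg) (isW_dirac u sg).

Lemma W_ext (m1 m2 : W S Sigma) : wf m1 = wf m2 -> m1 = m2.
Proof.
  destruct m1 as [f1 H1], m2 as [f2 H2]. simpl. intros <-.
  f_equal. apply proof_irrelevance.
Qed.

Definition ZeroA : assertion S Sigma := fun m => forall s, wf m s = pzero S.

Lemma ZeroA_BoxA Q : subA ZeroA (@BoxA S Sigma Q).
Proof. intros m Hm s Hs. contradiction (Hs (Hm s)). Qed.

Lemma OneA_BoxA P : subA (@OneA S Sigma P) (@BoxA S Sigma P).
Proof. intros m [_ Hsupp]. exact Hsupp. Qed.

Lemma OneA_mono (P Q : Sigma -> Prop) :
  (forall s, P s -> Q s) -> subA (@OneA S Sigma P) (@OneA S Sigma Q).
Proof. intros PQ m [Hmass Hsupp]. split; [exact Hmass | auto]. Qed.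

Lemma BoxA_mono (P Q : Sigma -> Prop) :
  (forall s, P s -> Q s) -> subA (@BoxA S Sigma P) (@BoxA S Sigma Q).
Proof. intros PQ m Hm s Hs. auto. Qed.

Lemma smul_r_1 (phi : assertion S Sigma) : subA (smul_r phi (pone S)) phi.
Proof.
  intros w [m [Hm Hw]]. replace w with m; [exact Hm|].
  apply W_ext, functional_extensionality. intros s. rewrite Hw. symmetry. apply (pmul_1r HS).
Qed.

Lemma smul_r_0 (phi : assertion S Sigma) : subA (smul_r phi (pzero S)) ZeroA.
Proof. intros w [m [_ Hw]] s. rewrite Hw. apply (pmul_0r HS). Qed.

Lemma smul_l_BoxA u Q : subA (smul_l u (@BoxA S Sigma Q)) (@BoxA S Sigma Q).
Proof.
  intros w [m [Hm Hw]] s Hs. apply Hm. intros H0.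
  apply Hs. rewrite Hw, H0. apply (pmul_0r HS).
Qed.

Lemma BoxA_wsum T (f : T -> W S Sigma) s Q :
  (forall t, @BoxA S Sigma Q (f t)) -> wsum f s -> @BoxA S Sigma Q s.
Proof.
  intros Hf Hs sg Hsg. apply NNPP. intros HQ. apply Hsg.
  apply (is_sum_zero_eq (Hs sg)). intros t.
  apply NNPP. intros Ht. exact (HQ (Hf t sg Ht)).
Qed.

Lemma BoxA_sub_point_masses (P : Sigma -> Prop) :
  subA (@BoxA S Sigma P)
    (bigunion (fun m : W S Sigma =>
       bigoplus (fun t : {s | P s} =>
         smul_l (wf m (proj1_sig t)) (@OneA S Sigma (eq (proj1_sig t)))))).
Proof.
  intros m Hm. exists m, (fun t => diracW (wf m (proj1_sig t)) (proj1_sig t)). split.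
  - intros [sg Psg]. exists (diracW (pone S) sg). simpl. split.
    + split; [apply mass_dirac|].
      intros s Hs. apply NNPP. intros Hne. exact (Hs (dirac_off _ (not_eq_sym Hne))).
    + intros s. destruct (classic (s = sg)) as [-> | Hne].
      * rewrite !dirac_at. symmetry. apply (pmul_1r HS).
      * rewrite !(dirac_off _ Hne). symmetry. apply (pmul_0r HS).
  - intros s. simpl. destruct (classic (P s)) as [Ps | Hns].
    + rewrite <- (dirac_at (wf m s) s).
      apply is_sum_single with (i0 := exist P s Ps).
      intros [t Pt] Hne. apply dirac_off. intros ->.
      apply Hne. f_equal. apply proof_irrelevance.
    + replace (wf m s) with (pzero S)
        by (symmetry; apply NNPP; intros Hs; exact (Hns (Hm s Hs))).
      apply is_sum_zero. intros [t Pt]. apply dirac_off. intros ->. contradiction.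
Qed.
End Weights.

Lemma tsem_cases Sigma (b : test Sigma) s :
  (tholds b s /\ tsem S b s = pone S) \/ (~ tholds b s /\ tsem S b s = pzero S).
Proof. unfold tsem. destruct (excluded_middle_informative (tholds b s)); tauto. Qed.

Section Derivations.
Variables (Sigma A : Type) (Gamma : assertion S Sigma -> A -> assertion S Sigma -> Prop).

Lemma derivable_zero D : derivable Gamma (@ZeroA Sigma) D (@ZeroA Sigma).
Proof.
  apply r_conseq with (phi := bigoplus (fun _ : Empty_set => @WAll S Sigma))
                      (psi := bigoplus (fun _ : Empty_set => @WAll S Sigma)).
  - intros m Hm. exists (fun e : Empty_set => match e with end). split; [intros []|].
    intros s. rewrite (Hm s). apply is_sum_zero. intros [].
  - apply r_choice. intros [].
  - intros m [f [_ Hf]] s. apply (is_sum_zero_eq (Hf s)). intros [].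
Qed.

Lemma derivable_BoxA_of_points (P Q : Sigma -> Prop) D :
  (forall sg, P sg -> derivable Gamma (@OneA S Sigma (eq sg)) D (@BoxA S Sigma Q)) ->
  derivable Gamma (@BoxA S Sigma P) D (@BoxA S Sigma Q).
Proof.
  intros Hpoint.
  eapply r_conseq with (psi := bigunion (fun m : W S Sigma =>
    bigoplus (fun t : {s | P s} => smul_l (wf m (proj1_sig t)) (@BoxA S Sigma Q))));
    [apply BoxA_sub_point_masses | |].
  - apply r_exists. intros m. apply r_choice. intros [sg Psg].
    apply r_scale, Hpoint, Psg.
  - intros w [m [f [Hf Hw]]]. apply (BoxA_wsum (f := f)); [|exact Hw].
    intros t. exact (smul_l_BoxA (Hf t)).
Qed.

Lemma derivable_assume_point (e : expr S Sigma) sg :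
  derivable Gamma (@OneA S Sigma (eq sg)) (Assume e)
    (smul_r (@OneA S Sigma (eq sg)) (esem e sg)).
Proof. apply r_assume. intros m s [_ Hsupp] Hs. now rewrite (Hsupp s Hs). Qed.

Variables (b : test Sigma) (C : cmd S Sigma A) (P : Sigma -> Prop).

Lemma while_body_point :
  derivable Gamma (@OneA S Sigma (andT S P b)) C (@BoxA S Sigma P) -> forall sg, P sg ->
  derivable Gamma (@OneA S Sigma (eq sg)) (SeqC (Assume (ETest b)) C) (@BoxA S Sigma P).
Proof.
  intros HC sg Psg. eapply r_seq; [apply derivable_assume_point|]. simpl.
  destruct (tsem_cases b sg) as [[_ Hb] | [_ Hb]]; rewrite Hb.
  - eapply r_conseq; [| exact HC | intros m Hm; exact Hm].
    intros m Hm. apply smul_r_1 in Hm. revert m Hm.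
    apply OneA_mono. intros s <-. split; assumption.
  - eapply r_conseq; [apply smul_r_0 | apply derivable_zero | apply ZeroA_BoxA].
Qed.

Lemma while_exit_point sg : P sg ->
  derivable Gamma (@OneA S Sigma (eq sg)) (Assume (ETest (TNot b)))
    (@BoxA S Sigma (andNotT S P b)).
Proof.
  intros Psg. eapply r_conseq; [intros m Hm; exact Hm | apply derivable_assume_point |].
  simpl. destruct (tsem_cases b sg) as [[Hb _] | [Hnb Hb]].
  - destruct (tsem_cases (TNot b) sg) as [[Hnb _] | [_ ->]]; [contradiction|].
    intros m Hm. apply ZeroA_BoxA, (smul_r_0 Hm).
  - destruct (tsem_cases (TNot b) sg) as [[_ ->] | [Hnnb _]]; [|contradiction].
    intros m Hm. apply smul_r_1, OneA_BoxA in Hm. revert m Hm.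
    apply BoxA_mono. intros s <-. split; assumption.
Qed.
End Derivations.
End PartialSemiring.

Theorem lemmaE11 (S : psr_ops) (HS : psr_axioms S) (Sigma A : Type)
  (Gamma : assertion S Sigma -> A -> assertion S Sigma -> Prop)
  (b : test Sigma) (C : cmd S Sigma A) (P : Sigma -> Prop) :
  derivable Gamma (@OneA S Sigma (andT S P b)) C (@BoxA S Sigma P) ->
  derivable Gamma (@OneA S Sigma P) (While b C) (@BoxA S Sigma (andNotT S P b)).
Proof.
  intros HC.
  apply r_conseq with (phi := @BoxA S Sigma P) (psi := @BoxA S Sigma (andNotT S P b));
    [apply OneA_BoxA | | intros m Hm; exact Hm].
  apply (r_iter (fun _ => @BoxA S Sigma P)
                (psi := fun _ => @BoxA S Sigma (andNotT S P b))).
  - intros m s Hm Hs. exact (BoxA_wsum HS Hm Hs).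
  - intros n. apply (derivable_BoxA_of_points HS), (while_body_point HS HC).
  - intros n. apply (derivable_BoxA_of_points HS), (while_exit_point HS).
Qed.
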